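(* Let $f$ satisfy conditions (1) and (2b), let $p>0$, $a=p/\pi$, and $n\in\mathbb{N}_0$. In the expression \[ 2\pi\int_0^\infty a\sum_{k=0}^\infty c_{2k}\,p^k\sum_{l=0}^k(-1)^{k-l}\frac{p^l}{(k-l)!\,(l!)^2}\,r^{2l+2n+1}\,e^{-pr^2}\,dr \] the order of summation and integration may be reversed, for arbitrary values of $p$.
   Context: $f:[0,\infty)\to\mathbb{R}$; $c_n=2\pi\int_0^\infty f(r)\,r^{n+1}dr$. Condition (1): there is a constant $F$ with $0\le f(r)\le F$ for all $r\ge0$, $c_0$ exists and $c_0>0$. Condition (2b): $c_{2n}$ exists for all $n\in\mathbb{N}_0$ and $c_n^{1/n}=o(n^{1/2})$ as $n\to\infty$. *)

From HB Require Import structures.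
From mathcomp Require Import all_boot all_order all_algebra.
From mathcomp Require Import all_classical all_reals all_analysis.
Set Implicit Arguments. Unset Strict Implicit. Unset Printing Implicit Defensive.
Import Order.TTheory GRing.Theory Num.Def Num.Theory.
Import numFieldNormedType.Exports.
Local Open Scope classical_set_scope.
Local Open Scope ring_scope.

Definition halfline (R : realType) : set R := `[0%R, +oo[%classic.
Arguments halfline R : clear implicits.

Definition moment_integrand (R : realType) (f : R -> R) (n : nat) : R -> R :=
  fun r => f r * r ^+ n.+1.

Definition moment_exists (R : realType) (f : R -> R) (n : nat) : Prop :=
  (@lebesgue_measure R).-integrable (halfline R) (EFin \o moment_integrand f n).

Definition moment (R : realType) (f : R -> R) (n : nat) : R :=
  2 * pi * (\int[@lebesgue_measure R]_(r in halfline R) moment_integrand f n r).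

Definition cond1 (R : realType) (f : R -> R) : Prop :=
  (exists F : R, forall r, 0 <= r -> 0 <= f r <= F) /\
  moment_exists f 0 /\ 0 < moment f 0.

(* Condition (2b): c_{2n} exists for all n and c_n^{1/n} = o(n^{1/2}) as n -> oo
   (little-o unfolded: for every eps > 0, eventually c_n^{1/n} <= eps * sqrt n). *)
Definition cond2b (R : realType) (f : R -> R) : Prop :=
  (forall n : nat, moment_exists f (2 * n)) /\
  (forall eps : R, 0 < eps ->
     \forall n \near \oo, moment f n `^ (n%:R^-1) <= eps * Num.sqrt (n%:R : R)).

Definition summand (R : realType) (f : R -> R) (p : R) (n k : nat) : R -> R :=
  fun r => (p / pi) * moment f (2 * k) * p ^+ k *
    (\sum_(l < k.+1) (-1) ^+ (k - l) * p ^+ l / ((k - l)`!%:R * (l`!%:R) ^+ 2)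
        * r ^+ (2 * l + 2 * n + 1)) * expR (- (p * r ^+ 2)).

From HB Require Import structures.
From mathcomp Require Import all_boot all_order all_algebra.
From mathcomp Require Import all_classical all_reals all_analysis.
From mathcomp Require Import measurable_realfun ring lra.
Import Order.TTheory GRing.Theory Num.Def Num.Theory.
Import numFieldNormedType.Exports.
Local Open Scope classical_set_scope.
Local Open Scope ring_scope.
Set Implicit Arguments. Unset Strict Implicit. Unset Printing Implicit Defensive.

(* The k-th summand factors as a c_{2k} p^k Lk(p r^2) r^(2n+1) e^(-p r^2), where
   Lk(x) = sum_l (-1)^(k-l) x^l / ((k-l)! l!^2) is (-1)^k/k! times the k-th Laguerre
   polynomial.  Writing x^l/l! <= 2^l e^(x/2) and summing with the binomial theorem
   gives |Lk(x)| <= 3^k/k! e^(x/2), and r^m e^(-p r^2/2) <= m! e^(2/p) e^(-r); so the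
   k-th summand is dominated by C c_{2k} (3p)^k/k! e^(-r).  Condition (2b) yields
   c_{2k} <= (2 eps^2 k)^k eventually for every eps > 0, and with k^k/k! <= e^k the
   series sum_k c_{2k} (3p)^k/k! is dominated by a geometric series.  Dominated
   convergence applied to the partial sums then exchanges sum and integral. *)

Lemma pow_div_fact_le_expR (R : realType) (x : R) j :
  0 <= x -> x ^+ j / j`!%:R <= expR x.
Proof.
case: j => [|j] x_ge0; last by have := expR_ge1Dxn j x_ge0; lra.
by rewrite expr0 fact0 divr1; have := expR_ge1Dx x; lra.
Qed.

Lemma pow_div_fact_le_expR_half (R : realType) (x : R) l :
  0 <= x -> x ^+ l / l`!%:R <= 2 ^+ l * expR (x / 2).
Proof.
move=> x_ge0; have := pow_div_fact_le_expR l (divr_ge0 x_ge0 (ler0n R 2)).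
rewrite -(ler_pM2l (exprn_gt0 l (ltr0n R 2))) mulrA -exprMn.
by rewrite [2 * _]mulrC divfK ?pnatr_eq0 // mulrC.
Qed.

Lemma sum_pow_div_fact (R : numFieldType) (x : R) k :
  \sum_(l < k.+1) x ^+ l / ((k - l)`!%:R * l`!%:R) = (1 + x) ^+ k / k`!%:R.
Proof.
rewrite addrC exprD1n mulr_suml; apply: eq_bigr => -[l /=]; rewrite ltnS => lk _.
have fact_neq0 m : m`!%:R != 0 :> R by rewrite pnatr_eq0 -lt0n fact_gt0.
have bin_neq0 : 'C(k, l)%:R != 0 :> R by rewrite pnatr_eq0 -lt0n bin_gt0.
by rewrite -(bin_fact lk) !natrM -mulr_natr; field; rewrite !fact_neq0 bin_neq0.
Qed.

Lemma exprn_expR_sqr_le (R : realType) (q r : R) m : 0 < q -> 0 <= r ->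
  r ^+ m * expR (- (q * r ^+ 2)) <= m`!%:R * expR q^-1 * expR (- r).
Proof.
move=> q_gt0 r_ge0.
have r_pow : r ^+ m <= m`!%:R * expR r.
  by rewrite mulrC -ler_pdivrMr ?ltr0n ?fact_gt0 // pow_div_fact_le_expR.
apply: le_trans (ler_wpM2r (expR_ge0 _) r_pow) _.
rewrite -!mulrA ler_wpM2l // -!expRD ler_expR -subr_ge0.
have -> : q^-1 - r - (r - q * r ^+ 2) = q * (r - q^-1) ^+ 2.
  by field; rewrite gt_eqF.
by rewrite mulr_ge0 ?sqr_ge0 ?ltW.
Qed.

Lemma powR_invnK (R : realType) (c : R) m : 0 <= c -> (0 < m)%N ->
  (c `^ m%:R^-1) ^+ m = c.
Proof.
move=> c_ge0 m_gt0.
by rewrite -powR_mulrn ?powR_ge0 // -powRrM mulVf ?powRr1 // pnatr_eq0 -lt0n.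
Qed.

Lemma near_series_le_cvg (R : realType) (u v : R ^nat) :
  (forall k, 0 <= u k) -> (forall k, 0 <= v k) ->
  (\forall k \near \oo, u k <= v k) -> cvgn (series v) -> cvgn (series u).
Proof.
move=> u_ge0 v_ge0 [N _ uv] cvg_v; rewrite -(is_cvg_series_restrict N).
pose w k := if (N <= k)%N then u k else 0.
have -> : (fun n => \sum_(N <= k < n) u k) = series w.
  by apply/funext => n; rewrite (big_nat_widenl N 0) // big_mkcond.
apply: (series_le_cvg _ v_ge0 _ cvg_v) => k; rewrite /w; case: ifP => // Nk.
exact: uv.
Qed.

Lemma series_le_lim (R : realType) (a : R ^nat) N :
  (forall k, 0 <= a k) -> cvgn (series a) -> series a N <= limn (series a).
Proof.
move=> a_ge0 cvg_a; apply: nondecreasing_cvgn_le => //.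
exact: nondecreasing_series.
Qed.

Section dominated_series.
Context d (T : measurableType d) (R : realType) (mu : {measure set T -> \bar R}).
Variables (D : set T) (g : nat -> T -> R) (a : R ^nat) (phi : T -> R).
Hypotheses (mD : measurable D) (mg : forall k, measurable_fun D (g k)).
Hypotheses (a_ge0 : forall k, 0 <= a k) (cvg_a : cvgn (series a)).
Hypotheses (iphi : mu.-integrable D (EFin \o phi)).
Hypothesis phi_ge0 : forall x, D x -> 0 <= phi x.
Hypothesis g_le : forall k x, D x -> `|g k x| <= a k * phi x.

Lemma dominated_series_cvg x : D x -> cvgn (series (g ^~ x)).
Proof.
move=> Dx; apply: normed_cvg.
apply: (series_le_cvg (v_ := phi x *: a)) => [k|k|k|] /=.
- exact: normr_ge0.
- by rewrite -[leRHS]/(phi x * a k) mulr_ge0 ?phi_ge0.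
- by rewrite -[leRHS]/(phi x * a k) mulrC g_le.
- exact: is_cvg_seriesZ.
Qed.

Lemma norm_series_le x N : D x ->
  `|series (g ^~ x) N| <= limn (series a) * phi x.
Proof.
move=> Dx; rewrite /series /=; apply: le_trans (ler_norm_sum _ _ _) _.
apply: (le_trans (y := \sum_(0 <= k < N) a k * phi x)).
  by apply: ler_sum => k _; exact: g_le.
rewrite -mulr_suml ler_wpM2r ?phi_ge0 //.
by move: (series_le_lim N a_ge0 cvg_a); rewrite /series /=.
Qed.

Lemma integrable_dominated k : mu.-integrable D (EFin \o g k).
Proof.
apply: (le_integrable mD _ _ (integrableZl mD (a k) iphi)) => [|x Dx /=].
  exact/measurable_EFinP.
by rewrite lee_fin [`|a k * _|]ger0_norm ?mulr_ge0 ?phi_ge0 ?g_le.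
Qed.

Let S x := limn (series (g ^~ x)).

Lemma cvg_series_integral :
  mu.-integrable D (EFin \o S) /\
  series (fun k => \int[mu]_(x in D) g k x) @ \oo --> \int[mu]_(x in D) S x.
Proof.
pose P : nat -> T -> R := fun N x => series (g ^~ x) N.
have mP N : measurable_fun D (EFin \o P N).
  by apply/measurable_EFinP; apply: measurable_sum.
have mS : measurable_fun D (EFin \o S).
  apply/measurable_EFinP.
  apply: (measurable_fun_cvg (h := P)) => [N|x Dx].
    exact/measurable_EFinP.
  exact: dominated_series_cvg.
have int_dom : mu.-integrable D (EFin \o (fun x => limn (series a) * phi x)).
  by apply: eq_integrable mD _ _ _ (integrableZl mD _ iphi).
have P_S : {ae mu, forall x, D x -> (EFin \o P ^~ x) @ \oo --> (S x)%:E}.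
  apply: aeW => x Dx; apply: cvg_EFin; first exact: nearW.
  exact: dominated_series_cvg.
have P_le : {ae mu, forall x N, D x -> `|(P N x)%:E| <= (limn (series a) * phi x)%:E}%E.
  by apply: aeW => x N Dx; rewrite lee_fin norm_series_le.
have [iS _ cvg_int] := dominated_convergence mD mP mS P_S int_dom P_le.
split => //.
have int_P N : (\int[mu]_(x in D) (EFin \o P N) x)%E =
    (series (fun k => \int[mu]_(x in D) g k x) N)%:E.
  rewrite /P /series /= -sumEFin; under eq_integral => x _ do rewrite -sumEFin.
  rewrite integral_sum //; last exact: integrable_dominated.
  apply: eq_bigr => k _.
  by rewrite fineK // integrable_fin_num // integrable_dominated.
have int_S : (\int[mu]_(x in D) (EFin \o S) x)%E = (\int[mu]_(x in D) S x)%:E.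
  by rewrite fineK // integrable_fin_num.
move: cvg_int; rewrite int_S (funext int_P).
exact: fine_cvg.
Qed.

Lemma series_integral_exchange :
  (forall x, D x -> cvgn (series (g ^~ x))) /\
  (forall k, mu.-integrable D (EFin \o g k)) /\
  mu.-integrable D (EFin \o S) /\
  cvgn (series (fun k => \int[mu]_(x in D) g k x)) /\
  \int[mu]_(x in D) S x = limn (series (fun k => \int[mu]_(x in D) g k x)).
Proof.
have [iS cvg_int] := cvg_series_integral.
split; first exact: dominated_series_cvg.
split; first exact: integrable_dominated.
split; first exact: iS.
split; first exact: cvgP cvg_int.
exact/esym/cvg_lim.
Qed.

End dominated_series.

Lemma halflineP (R : realType) (r : R) : halfline R r <-> 0 <= r.
Proof. by rewrite /halfline /= in_itv /= andbT. Qed.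

Section moments.
Variables (R : realType) (f : R -> R).
Hypotheses (f1 : cond1 f) (f2b : cond2b f).

Lemma moment_ge0 k : 0 <= moment f k.
Proof.
case: f1 => -[F f_bnd] _; rewrite /moment !mulr_ge0 ?pi_ge0 //.
apply: Rintegral_ge0 => r /halflineP r_ge0.
by rewrite mulr_ge0 ?exprn_ge0 //; case/andP: (f_bnd r r_ge0).
Qed.

Lemma moment_even_le eps : 0 < eps ->
  \forall k \near \oo, moment f (2 * k) <= (2 * eps ^+ 2 * k%:R) ^+ k.
Proof.
move=> eps_gt0; have [N _ root_le] := f2b.2 eps eps_gt0.
exists N.+1 => // k /= Nk.
have k_gt0 : (0 < k)%N by rewrite (leq_trans _ Nk).
have k2_gt0 : (0 < 2 * k)%N by rewrite muln_gt0.
have root_ge0 := powR_ge0 (moment f (2 * k)) (2 * k)%:R^-1.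
have root_le_k : moment f (2 * k) `^ (2 * k)%:R^-1 <= eps * Num.sqrt (2 * k)%:R.
  by apply: root_le => /=; rewrite (leq_trans (ltnW Nk)) // leq_pmull.
have eps_k_ge0 : 0 <= eps * Num.sqrt (2 * k)%:R by rewrite mulr_ge0 ?sqrtr_ge0 ?ltW.
rewrite -(powR_invnK (moment_ge0 _) k2_gt0) exprM.
rewrite ler_pXn2r // ?nnegrE ?exprn_ge0 ?mulr_ge0 ?(ltW eps_gt0) //.
apply: (le_trans (y := (eps * Num.sqrt (2 * k)%:R) ^+ 2)).
  by rewrite ler_pXn2r ?nnegrE.
by rewrite exprMn sqr_sqrtr ?ler0n // natrM mulrCA mulrA.
Qed.

Lemma cvg_moment_exp_series x : 0 < x ->
  cvgn (series (fun k => moment f (2 * k) * x ^+ k / k`!%:R)).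
Proof.
move=> x_gt0; pose eps := Num.sqrt (4 * x * expR 1)^-1.
have eps_gt0 : 0 < eps by rewrite sqrtr_gt0 invr_gt0 !mulr_gt0 ?expR_gt0.
have ratio : 2 * eps ^+ 2 * x * expR 1 = 2^-1.
  rewrite sqr_sqrtr ?invr_ge0 ?mulr_ge0 ?expR_ge0 ?(ltW x_gt0) //.
  by field; rewrite !gt_eqF ?expR_gt0.
apply: (near_series_le_cvg (v := geometric 1 2^-1)) => [k|k||].
- by rewrite divr_ge0 // mulr_ge0 ?exprn_ge0 ?moment_ge0 ?(ltW x_gt0).
- by rewrite /geometric /= mul1r exprn_ge0 ?invr_ge0.
- near=> k; rewrite /geometric /=.
  have k_fact_gt0 : 0 < k`!%:R :> R by rewrite ltr0n fact_gt0.
  apply: (le_trans (y := (2 * eps ^+ 2 * k%:R) ^+ k * x ^+ k / k`!%:R)).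
    rewrite ler_wpM2r ?invr_ge0 ?(ltW k_fact_gt0) // ler_wpM2r ?exprn_ge0 ?(ltW x_gt0) //.
    by near: k; exact: moment_even_le.
  have -> : (2 * eps ^+ 2 * k%:R) ^+ k * x ^+ k / k`!%:R =
      (2 * eps ^+ 2 * x) ^+ k * (k%:R ^+ k / k`!%:R).
    by rewrite !exprMn; field; rewrite gt_eqF.
  rewrite -ratio mul1r [in leRHS]exprMn.
  rewrite ler_wpM2l ?exprn_ge0 ?mulr_ge0 ?(ltW x_gt0) ?(ltW eps_gt0) //.
  by rewrite -expRM_natl mulr1 pow_div_fact_le_expR.
- by apply: is_cvg_geometric_series; rewrite gtr0_norm ?invf_lt1 ?ltr1n.
Unshelve. all: by end_near. Qed.

End moments.

Definition laguerre_scaled (R : numFieldType) k (x : R) : R :=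
  \sum_(l < k.+1) (-1) ^+ (k - l) * x ^+ l / ((k - l)`!%:R * l`!%:R ^+ 2).

Lemma norm_laguerre_scaled_le (R : realType) k (x : R) : 0 <= x ->
  `|laguerre_scaled k x| <= 3 ^+ k / k`!%:R * expR (x / 2).
Proof.
move=> x_ge0; rewrite -[3]/(1 + 2) -sum_pow_div_fact mulr_suml.
apply: le_trans (ler_norm_sum _ _ _) _; apply: ler_sum => l _.
rewrite -mulrA normrM normrX normrN normr1 expr1n mul1r.
rewrite ger0_norm ?mulr_ge0 ?invr_ge0 ?exprn_ge0 //.
have fact_neq0 m : m`!%:R != 0 :> R by rewrite pnatr_eq0 -lt0n fact_gt0.
have -> : x ^+ l / ((k - l)`!%:R * l`!%:R ^+ 2) =
    x ^+ l / l`!%:R / ((k - l)`!%:R * l`!%:R).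
  by field; rewrite !fact_neq0.
rewrite [leRHS]mulrAC ler_wpM2r ?invr_ge0 ?mulr_ge0 //.
exact: pow_div_fact_le_expR_half.
Qed.

Lemma summandE (R : realType) (f : R -> R) p n k r : summand f p n k r =
  p / pi * moment f (2 * k) * p ^+ k * laguerre_scaled k (p * r ^+ 2) *
  (r ^+ (2 * n + 1) * expR (- (p * r ^+ 2))).
Proof.
rewrite /summand /laguerre_scaled [RHS]mulrA; congr (_ * _).
rewrite -[RHS]mulrA mulr_suml; congr (_ * _); apply: eq_bigr => l _.
rewrite exprMn -exprM -!mulrA; congr (_ * (_ * _)).
by rewrite [RHS]mulrCA -exprD addnA.
Qed.

Lemma measurable_summand (R : realType) (f : R -> R) p n k :
  measurable_fun [set: R] (summand f p n k).
Proof.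
rewrite /summand.
apply: measurable_funM; last first.
  by apply: measurableT_comp => //; apply: measurableT_comp => //; apply: measurable_funM.
apply: measurable_funM => //; apply: measurable_sum => l.
exact: measurable_funM.
Qed.

Lemma integrable_expRN (R : realType) :
  (@lebesgue_measure R).-integrable (halfline R) (EFin \o (fun r => expR (- r))).
Proof.
have mD : measurable (halfline R) by exact: measurable_itv.
have := integrableS (mu := @lebesgue_measure R) measurableT mD (@subsetT _ _)
  (@integrable_exponential_pdf R 1 ltr01).
apply: eq_integrable => // r; rewrite inE => /halflineP r_ge0.
by rewrite /= exponential_pdfE // mul1r mulN1r.
Qed.

Lemma norm_summand_le (R : realType) (f : R -> R) p n k r :
  cond1 f -> 0 < p -> 0 <= r ->
  `|summand f p n k r| <=
    p / pi * (2 * n + 1)`!%:R * expR (2 / p) *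
    (moment f (2 * k) * (3 * p) ^+ k / k`!%:R) * expR (- r).
Proof.
move=> f1 p_gt0 r_ge0; set K := p / pi * moment f (2 * k) * p ^+ k.
have K_ge0 : 0 <= K.
  apply: mulr_ge0; last exact/exprn_ge0/ltW.
  by apply: mulr_ge0; [rewrite divr_ge0 ?pi_ge0 ?ltW | exact: moment_ge0].
have x_ge0 : 0 <= p * r ^+ 2 by rewrite mulr_ge0 ?sqr_ge0 ?ltW.
have G_ge0 : 0 <= r ^+ (2 * n + 1) * expR (- (p * r ^+ 2)).
  by rewrite mulr_ge0 ?exprn_ge0 ?expR_ge0.
rewrite summandE normrM normrM (ger0_norm K_ge0) (ger0_norm G_ge0).
apply: (le_trans (y := K * (3 ^+ k / k`!%:R * expR (p * r ^+ 2 / 2)) *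
  (r ^+ (2 * n + 1) * expR (- (p * r ^+ 2))))).
  by rewrite ler_wpM2r // ler_wpM2l // norm_laguerre_scaled_le.
have -> : K * (3 ^+ k / k`!%:R * expR (p * r ^+ 2 / 2)) *
    (r ^+ (2 * n + 1) * expR (- (p * r ^+ 2))) =
    K * (3 ^+ k / k`!%:R) * (r ^+ (2 * n + 1) * expR (- (p / 2 * r ^+ 2))).
  have half : expR (p * r ^+ 2 / 2) * expR (- (p * r ^+ 2)) =
      expR (- (p / 2 * r ^+ 2)) by rewrite -expRD; congr expR; field.
  by rewrite -half; ring.
have -> : p / pi * (2 * n + 1)`!%:R * expR (2 / p) *
    (moment f (2 * k) * (3 * p) ^+ k / k`!%:R) * expR (- r) =
    K * (3 ^+ k / k`!%:R) * ((2 * n + 1)`!%:R * expR (p / 2)^-1 * expR (- r)).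
  by rewrite invf_div exprMn /K; ring.
rewrite ler_wpM2l ?(mulr_ge0 K_ge0) ?divr_ge0 ?exprn_ge0 //.
by rewrite exprn_expR_sqr_le ?divr_gt0.
Qed.

Theorem lemma11 (R : realType) (f : R -> R) (p : R) (n : nat) :
  cond1 f -> cond2b f -> 0 < p ->
  (* the series defining the integrand converges at every r >= 0 *)
  (forall r, 0 <= r -> cvgn (series (fun k => summand f p n k r))) /\
  (* every summand is integrable on [0,oo) *)
  (forall k, (@lebesgue_measure R).-integrable (halfline R) (EFin \o summand f p n k)) /\
  (* the sum is integrable on [0,oo) *)
  (@lebesgue_measure R).-integrable (halfline R)
     (EFin \o (fun r => limn (series (fun k => summand f p n k r)))) /\
  (* the series of integrals converges *)
  cvgn (series (fun k => \int[@lebesgue_measure R]_(r in halfline R) summand f p n k r)) /\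
  (* and the two orders of summation / integration agree *)
  2 * pi * (\int[@lebesgue_measure R]_(r in halfline R)
               limn (series (fun k => summand f p n k r)))
  = 2 * pi * limn (series (fun k =>
               \int[@lebesgue_measure R]_(r in halfline R) summand f p n k r)).
Proof.
move=> f1 f2b p_gt0.
pose C := p / pi * (2 * n + 1)`!%:R * expR (2 / p).
pose u k := moment f (2 * k) * (3 * p) ^+ k / k`!%:R.
have C_ge0 : 0 <= C by rewrite !mulr_ge0 ?invr_ge0 ?ler0n ?pi_ge0 ?expR_ge0 ?(ltW p_gt0).
have u_ge0 k : 0 <= u k.
  by rewrite divr_ge0 // mulr_ge0 ?moment_ge0 // exprn_ge0 // mulr_ge0 ?(ltW p_gt0).
have cvg_u : cvgn (series u).
  by apply: cvg_moment_exp_series; rewrite ?mulr_gt0.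
have [cvg_S [int_g [int_S [cvg_int ->]]]] :=
  @series_integral_exchange _ _ _ (@lebesgue_measure R) (halfline R)
    (summand f p n) (C *: u) (fun r => expR (- r)) (measurable_itv _)
    (fun k => measurable_funTS (measurable_summand f p n k))
    (fun k => mulr_ge0 C_ge0 (u_ge0 k)) (is_cvg_seriesZ (k := C) cvg_u)
    (integrable_expRN R) (fun r _ => expR_ge0 (- r))
    (fun k r r_ge0 => norm_summand_le n k f1 p_gt0 ((halflineP r).1 r_ge0)).
by split; [move=> r /halflineP; exact: cvg_S | do !split].
Qed.
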